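(* Let $\gamma\in(0,1)$, $\mu\in(0,\infty)\setminus\{1\}$. Let $g$ be a concave traveling wave with compact nonempty support and speed $v$, normalized so that $\sup\{x:g(x)>0\}=0$. Let $s=\sup\{\xi:\sup_x\Phi_\xi[g](x)\ge\gamma\}$. Then $v>0$, and $$v=\begin{cases}\dfrac{1-\gamma-\mu s}{1-\mu} & \text{if } v\le s,\\[2mm] 1-\gamma & \text{if } v>s.\end{cases}$$
   Context: Let $\pi(x)=x$ if $x\ge0$ and $\pi(x)=-\infty$ otherwise. Write $x_+=\max(x,0)$ and use $\sup\emptyset=-\infty$. Define $\Phi_\xi[h](x)=1-\gamma-\mu(\xi-x)_++\sup_y(h(y)-|x-y|)$. The dynamics is defined for $n\ge1$ by: - $p_n(x)=\pi[1-\gamma+\sup_y(g_{n-1}(y)-\min(1,\mu)(x-y)_+)]$; - $s_n=\sup\{x:p_n(x)\ge\gamma\}$; - $g_n=\pi\circ\Phi_{s_n}[g_{n-1}]$. A traveling wave with speed $v$ is a $g$ with $g_0=g\Rightarrow g_n(x)=g(x-nv)$ for all $n,x$. The support is $\{g\ge0\}$. *)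

(* R : realType, extended reals \bar R model R ∪ {-∞} (and +∞). *)
From HB Require Import structures.
From mathcomp Require Import all_boot all_order all_algebra.
From mathcomp Require Import all_classical all_reals all_analysis.
Set Implicit Arguments. Unset Strict Implicit. Unset Printing Implicit Defensive.
Import Order.TTheory GRing.Theory Num.Theory numFieldNormedType.Exports.
Local Open Scope classical_set_scope.
Local Open Scope ring_scope.
Local Open Scope ereal_scope.

Section Dyn.
Variable R : realType.

Definition piE (x : \bar R) : \bar R := if 0 <= x then x else -oo.

Definition pospart (x : R) : R := Num.max x 0%R.

(* Phi_xi[h](x) = 1 - gamma - mu (xi - x)_+ + sup_y (h y - |x - y|);
   xi is allowed to be an extended real (s_n may be infinite),
   (xi - x)_+ is computed in \bar R. *)
Definition Phi (gamma mu : R) (xi : \bar R) (h : R -> \bar R) (x : R) : \bar R :=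
  (1 - gamma)%R%:E - mu%:E * maxe (xi - x%:E) 0
  + ereal_sup [set h y - `|x - y|%R%:E | y in [set: R]].

Definition p_of (gamma mu : R) (h : R -> \bar R) (x : R) : \bar R :=
  piE ((1 - gamma)%R%:E
       + ereal_sup [set h y - (Num.min 1 mu * pospart (x - y))%R%:E | y in [set: R]]).

Definition s_of (gamma mu : R) (h : R -> \bar R) : \bar R :=
  ereal_sup [set x%:E | x in [set x : R | gamma%:E <= p_of gamma mu h x]].

Definition step (gamma mu : R) (h : R -> \bar R) : R -> \bar R :=
  fun x => piE (Phi gamma mu (s_of gamma mu h) h x).

Definition gseq (gamma mu : R) (g : R -> \bar R) (n : nat) : R -> \bar R :=
  iter n (step gamma mu) g.

Definition traveling_wave (gamma mu : R) (g : R -> \bar R) (v : R) : Prop :=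
  forall (n : nat) (x : R), gseq gamma mu g n x = g (x - n%:R * v)%R.

Definition supp (g : R -> \bar R) : set R := [set x | 0 <= g x].

Definition concaveE (g : R -> \bar R) : Prop :=
  forall (x y t : R), (0 < t < 1)%R ->
    t%:E * g x + (1 - t)%R%:E * g y <= g (t * x + (1 - t) * y)%R.

End Dyn.

(* Write Phi_s[g] = c + G, where c(x) = 1 - gamma - mu (s - x)_+ is nondecreasing and
   G = lipenv g is 1-Lipschitz; hence Phi_s[g](w) <= Phi_s[g](x) + (x - w) for w <= x.
   The threshold s is finite: s = +oo would make g = -oo, while s = -oo would let g grow
   by 1 - gamma at each step along z0 - n v.  The wave equation reads
   g(y) = pi(Phi_s[g](y + v)), and the normalisation sup {g > 0} = 0 forces
   Phi_s[g](v) = 0, so g(0) = 0 and g(y) <= -y wherever g(y) >= 0, the case y > 0 being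
   excluded by concavity.  If v <= 0, then c(0) <= 0 and the wave equation yields
   (1 + mu) g <= sup g, absurd since sup g is finite (compact support) and positive.
   Hence v > 0, G(v) = -v, and Phi_s[g](v) = 0 becomes 1 - gamma - mu (s - v)_+ = v,
   which is the stated dichotomy.  Finally the s of the statement is s_1 because
   sup_x Phi_xi[g](x) = 1 - gamma + sup_y (g y - min(1, mu) (xi - y)_+). *)

From Pilot Require Import Defs.
From HB Require Import structures.
From mathcomp Require Import all_boot all_order all_algebra.
From mathcomp Require Import all_classical all_reals all_analysis.
From mathcomp Require Import ring lra.
Import Order.TTheory GRing.Theory Num.Theory numFieldNormedType.Exports.
Local Open Scope classical_set_scope.
Local Open Scope ring_scope.
Local Open Scope ereal_scope.

Section Envelopes.
Context {R : realType}.
Implicit Types (a z : \bar R) (x y w xi gamma mu : R) (g : R -> \bar R).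

(* Plain [piE] is a notation of generic_quotient. *)
Lemma lee_piE a z : 0 <= a -> (a <= Defs.piE z) = (a <= z).
Proof.
move=> a0; rewrite /Defs.piE; case: ifPn => // z0.
have -> : (a <= z) = false by apply/negbTE; apply: contra z0; exact: le_trans.
apply/negbTE; apply: contra z0 => a_ninf.
exact: le_trans a0 (le_trans a_ninf (leNye _)).
Qed.

Lemma lte_piE a z : 0 <= a -> (a < Defs.piE z) = (a < z).
Proof.
move=> a0; rewrite /Defs.piE; case: ifPn => // z0.
have -> : (a < z) = false by apply/negbTE; apply: contra z0 => /ltW; exact: le_trans.
by rewrite ltNge leNye.
Qed.

Lemma piE_lt0 z : Defs.piE z < 0 -> Defs.piE z = -oo.
Proof. by rewrite /Defs.piE; case: ifPn => // z0 /(le_lt_trans z0); rewrite ltxx. Qed.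

Lemma ge0_piE z : 0 <= Defs.piE z -> Defs.piE z = z.
Proof. by rewrite /Defs.piE; case: ifPn. Qed.

Lemma pospart_ge0 x : (0 <= pospart x)%R.
Proof. by rewrite /pospart le_max lexx orbT. Qed.

Lemma ler_pospart x : (x <= pospart x)%R.
Proof. by rewrite /pospart le_max lexx. Qed.

Lemma ger0_pospart {x} : (0 <= x)%R -> pospart x = x.
Proof. by move=> ?; rewrite /pospart max_l. Qed.

Lemma ler0_pospart {x} : (x <= 0)%R -> pospart x = 0%R.
Proof. by move=> ?; rewrite /pospart max_r. Qed.

Lemma pospart_le {x y} : (x <= y)%R -> (pospart x <= pospart y)%R.
Proof. by move=> xy; rewrite /pospart ge_max !le_max xy lexx !orbT. Qed.

Definition lipenv g x := ereal_sup [set g y - `|x - y|%:E | y in [set: R]].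

Lemma lipenv_ub g x y : g y - `|x - y|%:E <= lipenv g x.
Proof. by apply: ereal_sup_ubound; exists y. Qed.

Lemma le_lipenv g x : g x <= lipenv g x.
Proof. by have := lipenv_ub g x x; rewrite subrr normr0 sube0. Qed.

Lemma lipenv_lip g w x : lipenv g w <= lipenv g x + `|w - x|%:E.
Proof.
apply: ge_ereal_sup => _ [y _ <-].
apply: le_trans (leeD2r _ (lipenv_ub g x y)); rewrite -addeA -EFinN -EFinD.
rewrite leeD2l // lee_fin; have := ler_distD w x y; rewrite (distrC x w); lra.
Qed.

Lemma lipenv_le_sup g x : lipenv g x <= ereal_sup (range g).
Proof.
apply: ge_ereal_sup => _ [y _ <-].
apply: (@le_trans _ _ (g y)); first by rewrite leeBlDr // leeDl.
by apply: ereal_sup_ubound; exists y.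
Qed.

Lemma lipenv_le_opp {g} :
  (forall y, g y <= (- y)%:E) -> forall x, lipenv g x <= (- x)%:E.
Proof.
move=> g_le x; apply: ge_ereal_sup => _ [y _ <-].
apply: le_trans (leeB (g_le y) (lexx _)) _; rewrite -EFinB lee_fin.
have := ler_norm (x - y); lra.
Qed.

Definition rampenv mu g xi :=
  ereal_sup [set g y - (Num.min 1 mu * pospart (xi - y))%:E | y in [set: R]].

Lemma rampenv_ub mu g xi y :
  g y - (Num.min 1 mu * pospart (xi - y))%:E <= rampenv mu g xi.
Proof. by apply: ereal_sup_ubound; exists y. Qed.

Lemma le_rampenv mu g x : g x <= rampenv mu g x.
Proof. by have := rampenv_ub mu g x x; rewrite subrr ler0_pospart // mulr0 sube0. Qed.

Lemma PhiE gamma mu xi g x :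
  Phi gamma mu xi%:E g x = (1 - gamma - mu * pospart (xi - x))%:E + lipenv g x.
Proof. by rewrite /Phi /pospart -EFin_max. Qed.

Lemma Phi_le_left gamma mu xi g {w x} : (0 <= mu)%R -> (w <= x)%R ->
  Phi gamma mu xi%:E g w <= Phi gamma mu xi%:E g x + (x - w)%:E.
Proof.
move=> mu0 wx; rewrite !PhiE -addeA; apply: leeD.
  by rewrite lee_fin lerB // ler_wpM2l // pospart_le // lerB.
by have := lipenv_lip g w x; rewrite distrC ger0_norm // subr_ge0.
Qed.

Lemma ramp_le_cost mu xi x y : (0 < mu)%R ->
  (Num.min 1 mu * pospart (xi - y) <= mu * pospart (xi - x) + `|x - y|)%R.
Proof.
move=> mu0; set m := Num.min 1%R mu.
have m0 : (0 <= m)%R by rewrite le_min ler01 ltW.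
have p_le : (pospart (xi - y) <= pospart (xi - x) + `|x - y|)%R.
  rewrite {1}/pospart ge_max addr_ge0 ?pospart_ge0 // andbT.
  have := ler_pospart (xi - x); have := ler_norm (x - y); lra.
apply: le_trans (ler_wpM2l m0 p_le) _; rewrite mulrDr lerD //.
  by rewrite ler_wpM2r ?pospart_ge0 // ge_min lexx orbT.
by rewrite ler_piMl // ge_min lexx.
Qed.

Lemma ramp_cost_attained mu xi y : (0 < mu)%R ->
  exists x, (mu * pospart (xi - x) + `|x - y| <= Num.min 1 mu * pospart (xi - y))%R.
Proof.
move=> mu0; have [mu1|mu1] := leP mu 1%R.
  by exists y; rewrite subrr normr0 addr0.
have [xiy|xiy] := leP xi y.
  by exists y; rewrite subrr normr0 addr0 !ler0_pospart ?subr_le0 // !mulr0.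
exists xi; rewrite subrr ler0_pospart // mulr0 add0r mul1r.
by rewrite ger0_pospart ?ger0_norm ?subr_ge0 // ltW.
Qed.

Lemma ereal_sup_Phi gamma mu xi g : (0 < mu)%R ->
  ereal_sup [set Phi gamma mu xi%:E g x | x in [set: R]]
  = (1 - gamma)%:E + rampenv mu g xi.
Proof.
move=> mu0; apply/eqP; rewrite eq_le; apply/andP; split.
- apply: ge_ereal_sup => _ [x _ <-]; rewrite PhiE.
  have lip_le : lipenv g x <= rampenv mu g xi + (mu * pospart (xi - x))%:E.
    apply: ge_ereal_sup => _ [y _ <-].
    apply: le_trans (leeD2r _ (rampenv_ub mu g xi y)); rewrite -addeA -EFinN -EFinD.
    by rewrite leeD2l // lee_fin; have := ramp_le_cost mu xi x y mu0; lra.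
  by apply: le_trans (leeD2l _ lip_le) _; rewrite addeCA -EFinD subrK addeC.
- rewrite addeC -leeBrDr //; apply: ge_ereal_sup => _ [y _ <-]; rewrite leeBrDr //.
  have [x x_le] := ramp_cost_attained mu xi y mu0.
  apply: (@le_trans _ _ (Phi gamma mu xi%:E g x)); last by apply: ereal_sup_ubound; exists x.
  rewrite PhiE; apply: le_trans (leeD2l _ (lipenv_ub g x y)).
  rewrite -addeA -EFinN -EFinD addeCA -EFinB leeD2l // lee_fin; lra.
Qed.

Lemma ereal_sup_Phi_threshold gamma mu g : (0 < gamma)%R -> (0 < mu)%R ->
  ereal_sup [set xi%:E | xi in [set xi : R | gamma%:E <=
    ereal_sup [set Phi gamma mu xi%:E g x | x in [set: R]]]] = s_of gamma mu g.
Proof.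
move=> gamma0 mu0; rewrite /s_of; congr (ereal_sup (image _ _)).
by apply/seteqP; split => xi /=; rewrite ereal_sup_Phi // /p_of lee_piE // lee_fin; exact: ltW.
Qed.

Lemma convex_comb_gt0 {x y} : (x <= 0)%R -> (0 < y)%R ->
  exists2 t, (0 < t < 1)%R & (0 < t * x + (1 - t) * y)%R.
Proof.
move=> x_le0 y_gt0; have yx_gt0 : (0 < 2 * (y - x))%R by lra.
exists (y / (2 * (y - x)))%R.
  by rewrite divr_gt0 //= ltr_pdivrMr // mul1r; lra.
have -> : (y / (2 * (y - x)) * x + (1 - y / (2 * (y - x))) * y = y / 2)%R.
  by field; lra.
by rewrite divr_gt0.
Qed.

Lemma concaveE_gt0 {g x y t} : concaveE g -> (0 < t < 1)%R ->
  0 < g x -> 0 <= g y -> 0 < g (t * x + (1 - t) * y)%R.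
Proof.
move=> conc t01 gx gy; apply: lt_le_trans (conc x y t t01).
have [t0 t1] := andP t01.
apply: (@lt_le_trans _ _ (t%:E * g x)); first by rewrite mule_gt0 // lte_fin.
by rewrite leeDl // mule_ge0 // lee_fin subr_ge0 ltW.
Qed.

End Envelopes.

Section TravelingWave.
Context {R : realType} {gamma mu v : R} {g : R -> \bar R}.
Hypotheses (gamma_gt0 : (0 < gamma)%R) (gamma_lt1 : (gamma < 1)%R) (mu_gt0 : (0 < mu)%R)
  (tw : traveling_wave gamma mu g v) (supp_neq0 : supp g !=set0).

Lemma traveling_wave1 x : g x = Defs.piE (Phi gamma mu (s_of gamma mu g) g (x + v)%R).
Proof. by have := tw 1%N (x + v)%R; rewrite /gseq /= mul1r addrK. Qed.

Lemma s_of_neq_pinfty : s_of gamma mu g != +oo.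
Proof.
apply/negP => /eqP s_pinf; case: supp_neq0 => z.
rewrite /supp /= traveling_wave1 s_pinf /Phi.
have -> : forall a : R, maxe (+oo - a%:E) 0 = +oo by [].
by rewrite gt0_muley ?lte_fin // addeNy addNye.
Qed.

Lemma s_of_neq_ninfty : s_of gamma mu g != -oo.
Proof.
apply/negP => /eqP s_ninf; case: supp_neq0 => z0 gz0.
have grow n : (n%:R * (1 - gamma))%:E <= g (z0 - n%:R * v)%R.
  elim: n => [|n IH]; first by rewrite !mul0r subr0.
  have -> : (z0 - n.+1%:R * v = z0 - n%:R * v - v)%R.
    by rewrite -natr1 mulrDl mul1r opprD addrA.
  rewrite traveling_wave1 subrK s_ninf /Phi addNye maxNye mule0 sube0.
  rewrite lee_piE; last by rewrite lee_fin mulr_ge0 // subr_ge0 ltW.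
  by rewrite -natr1 mulrDl mul1r EFinD addeC leeD2l // (le_trans IH (le_lipenv _ _)).
have [n n_large] : exists n : nat, (gamma <= n%:R * (1 - gamma))%R.
  exists (Num.Def.archi_bound (gamma / (1 - gamma))).
  have ratio_ge0 : (0 <= gamma / (1 - gamma))%R by rewrite divr_ge0 ?subr_ge0 ?ltW.
  by rewrite -ler_pdivrMr ?subr_gt0 // ltW // archi_boundP.
have : (z0 - n%:R * v)%:E <= s_of gamma mu g.
  apply: ereal_sup_ubound; exists (z0 - n%:R * v)%R => //=.
  rewrite /p_of lee_piE; last by rewrite lee_fin; exact: ltW.
  apply: le_trans (leeD2l _ (le_trans (grow n) (le_rampenv _ _ _))).
  rewrite -EFinD lee_fin; apply: le_trans n_large _.
  by rewrite lerDr subr_ge0; exact: ltW.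
by rewrite s_ninf leeNy_eq.
Qed.

Lemma s_of_fin : exists s : R, s_of gamma mu g = s%:E.
Proof.
move: s_of_neq_pinfty s_of_neq_ninfty.
by case: (s_of gamma mu g) => [s _ _| |]; [exists s| |].
Qed.

End TravelingWave.

Section WaveShape.
Context {R : realType} {gamma mu v s : R} {g : R -> \bar R}.
Hypotheses (gamma_lt1 : (gamma < 1)%R) (mu_gt0 : (0 < mu)%R)
  (tw : traveling_wave gamma mu g v) (s_ofE : s_of gamma mu g = s%:E)
  (sup_pos_eq0 : ereal_sup [set x%:E | x in [set x : R | 0 < g x]] = 0)
  (conc : concaveE g) (supp_compact : compact (supp g)).

Local Notation Phis := (Phi gamma mu s%:E g).

Lemma wave_eq y : g y = Defs.piE (Phis (y + v)%R).
Proof. by rewrite (traveling_wave1 tw) s_ofE. Qed.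

Lemma g_gt0_le0 {z} : 0 < g z -> (z <= 0)%R.
Proof.
move=> gz; rewrite -lee_fin [leRHS](_ : _ = 0) // -sup_pos_eq0.
by apply: ereal_sup_ubound; exists z.
Qed.

Lemma exists_gt0_near0 e : (0 < e)%R -> exists2 z, (- e < z)%R & 0 < g z.
Proof.
move=> e0; have : (- e)%:E < ereal_sup [set x%:E | x in [set x : R | 0 < g x]].
  by rewrite sup_pos_eq0 lte_fin oppr_lt0.
by case/ereal_sup_gt => _ [z gz <-]; rewrite lte_fin; exists z.
Qed.

Lemma Phis_gt0_le_v x : 0 < Phis x -> (x <= v)%R.
Proof.
move=> Px; have : 0 < g (x - v)%R by rewrite wave_eq subrK lte_piE.
by move/g_gt0_le0; rewrite subr_le0.
Qed.

Lemma Phis_v : Phis v = 0.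
Proof.
apply/eqP; rewrite eq_le; apply/andP; split.
- apply/lee_addgt0Pr => e e0; rewrite add0e.
  have ve : (v <= v + e)%R by rewrite lerDl ltW.
  have := Phi_le_left gamma mu s g (ltW mu_gt0) ve.
  rewrite (_ : v + e - v = e)%R; last by rewrite addrC addKr.
  move/le_trans; apply; rewrite -[leRHS]add0e leeD2r // leNgt.
  by apply/negP => /Phis_gt0_le_v; rewrite gerDl leNgt e0.
- apply/lee_addgt0Pr => e e0; have [z ze gz] := exists_gt0_near0 e e0.
  have zv : (z + v <= v)%R by rewrite gerDr g_gt0_le0.
  have Pzv : 0 < Phis (z + v) by rewrite -lte_piE -?wave_eq.
  apply: le_trans (ltW Pzv) _.
  apply: le_trans (Phi_le_left gamma mu s g (ltW mu_gt0) zv) _.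
  by rewrite leeD2l // lee_fin opprD addrCA subrr addr0 lerNl ltW.
Qed.

Lemma g0 : g 0%R = 0.
Proof. by rewrite wave_eq add0r Phis_v /Defs.piE lexx. Qed.

Lemma wave_eq_ge0 y : 0 <= g y -> g y = Phis (y + v)%R.
Proof. by rewrite wave_eq => /ge0_piE. Qed.

Lemma g_lt0_ninfty y : g y < 0 -> g y = -oo.
Proof. by rewrite wave_eq => /piE_lt0. Qed.

Lemma g_ge0_le0 {y} : 0 <= g y -> (y <= 0)%R.
Proof.
move=> gy; rewrite leNgt; apply/negP => y_gt0.
have [z _ gz_gt0] := exists_gt0_near0 1%R ltr01.
have [t t01 tzy_gt0] := convex_comb_gt0 (g_gt0_le0 gz_gt0) y_gt0.
by have := g_gt0_le0 (concaveE_gt0 conc t01 gz_gt0 gy); rewrite leNgt tzy_gt0.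
Qed.

Lemma g_le_opp y : g y <= (- y)%:E.
Proof.
have [gy_ge0|/g_lt0_ninfty ->] := leP 0 (g y); last exact: leNye.
have yv : (y + v <= v)%R by rewrite gerDr g_ge0_le0.
rewrite wave_eq_ge0 //; apply: le_trans (Phi_le_left gamma mu s g (ltW mu_gt0) yv) _.
by rewrite Phis_v add0e lee_fin opprD addrCA subrr addr0.
Qed.

Lemma opp_norm_le_lipenv x : (- `|x|)%:E <= lipenv g x.
Proof. by rewrite EFinN; have := lipenv_ub g x 0; rewrite g0 subr0 add0e. Qed.

Lemma ereal_sup_range_fin : exists2 m : R, ereal_sup (range g) = m%:E & (0 < m)%R.
Proof.
have [B _ B_bound] := pinfty_ex_gt0 (compact_bounded supp_compact).
have g_le_B y : g y <= B%:E.
  have [gy_ge0|/g_lt0_ninfty ->] := leP 0 (g y); last exact: leNye.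
  apply: le_trans (g_le_opp y) _; rewrite lee_fin.
  by apply: le_trans (B_bound y gy_ge0); rewrite -normrN ler_norm.
have [z _ gz_gt0] := exists_gt0_near0 1%R ltr01.
have gz_le : g z <= ereal_sup (range g) by apply: ereal_sup_ubound; exists z.
have sup_le : ereal_sup (range g) <= B%:E by apply: ge_ereal_sup => _ [y _ <-].
move: (lt_le_trans gz_gt0 gz_le) sup_le.
by case: (ereal_sup (range g)) => // m m_gt0 _; exists m.
Qed.

Lemma v_gt0 : (0 < v)%R.
Proof.
rewrite ltNge; apply/negP => v_le0.
have Phis0_le0 : Phis 0 <= 0.
  rewrite leNgt; apply/negP => Phis0_gt0.
  have v0 : v = 0%R by apply/eqP; rewrite eq_le Phis_gt0_le_v // v_le0.
  by move: Phis0_gt0; rewrite -v0 Phis_v ltxx.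
have lip0 : lipenv g 0 = 0.
  apply/eqP; rewrite eq_le; apply/andP; split.
    by have := lipenv_le_opp g_le_opp 0%R; rewrite oppr0.
  by have := opp_norm_le_lipenv 0%R; rewrite normr0 oppr0.
have cost0 : (1 - gamma - mu * pospart s <= 0)%R.
  by move: Phis0_le0; rewrite PhiE lip0 adde0 lee_fin subr0.
have s_gt0 : (0 < s)%R.
  rewrite ltNge; apply/negP => s_le0.
  by move: cost0; rewrite ler0_pospart // mulr0 subr0 subr_le0 leNgt gamma_lt1.
rewrite (ger0_pospart (ltW s_gt0)) in cost0.
have [m sup_m m_gt0] := ereal_sup_range_fin.
have g_le y : g y <= (m / (1 + mu))%:E.
  have [gy_ge0|/g_lt0_ninfty ->] := leP 0 (g y); last exact: leNye.
  have y_le0 := g_ge0_le0 gy_ge0.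
  have := g_le_opp y; rewrite wave_eq_ge0 // PhiE.
  have := lipenv_le_sup g (y + v)%R; rewrite sup_m.
  rewrite ger0_pospart; last by lra.
  case: (lipenv g (y + v)) => [l||] //; last by move=> _ _; rewrite addeNy leNye.
  rewrite -EFinD !lee_fin ler_pdivlMr ?addr_gt0 //.
  have := mulr_ge0_le0 (ltW mu_gt0) v_le0.
  by move=> mu_v l_le /[dup] /(ler_wpM2l (ltW mu_gt0)); lra.
have : m%:E <= (m / (1 + mu))%:E by rewrite -sup_m; apply: ge_ereal_sup => _ [y _ <-].
by rewrite lee_fin ler_pdivlMr ?addr_gt0 // mulrDr mulr1 gerDl leNgt mulr_gt0.
Qed.

Lemma speed_eq : (1 - gamma - mu * pospart (s - v) = v)%R.
Proof.
have lipv : lipenv g v = (- v)%:E.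
  apply/eqP; rewrite eq_le (lipenv_le_opp g_le_opp v) /=.
  by have := opp_norm_le_lipenv v; rewrite gtr0_norm // v_gt0.
have := Phis_v; rewrite PhiE lipv -EFinD => /eqP; rewrite eqe subr_eq0.
by move/eqP.
Qed.

End WaveShape.

Theorem lemmaS3p4 (R : realType) (gamma mu : R) (g : R -> \bar R) (v : R) :
  (0 < gamma < 1)%R -> (0 < mu)%R -> mu != 1%R ->
  (forall x, g x != +oo) ->
  concaveE g ->
  traveling_wave gamma mu g v ->
  supp g !=set0 -> compact (supp g) ->
  ereal_sup [set x%:E | x in [set x : R | 0 < g x]] = 0 ->
  let s := ereal_sup [set xi%:E | xi in
             [set xi : R | gamma%:E <= ereal_sup [set Phi gamma mu xi%:E g x | x in [set: R]]]] in
  (0 < v)%R /\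
  (v%:E <= s -> exists s0 : R, s = s0%:E /\ v = ((1 - gamma - mu * s0) / (1 - mu))%R) /\
  (s < v%:E -> v = (1 - gamma)%R).
Proof.
move=> /andP[gamma_gt0 gamma_lt1] mu_gt0 mu_neq1 _ conc tw supp_neq0 supp_compact sup_pos s.
have [s0 s_ofE] := s_of_fin gamma_gt0 gamma_lt1 mu_gt0 tw supp_neq0.
have sE : s = s0%:E by rewrite /s ereal_sup_Phi_threshold // s_ofE.
have v_pos := v_gt0 gamma_lt1 mu_gt0 tw s_ofE sup_pos conc supp_compact.
have := speed_eq gamma_lt1 mu_gt0 tw s_ofE sup_pos conc supp_compact.
rewrite sE lee_fin lte_fin => v_eq; split=> //; split=> [v_le|s_lt].
- exists s0; split=> //; rewrite ger0_pospart ?subr_ge0 // in v_eq.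
  have mu1_neq0 : (1 - mu != 0)%R by rewrite subr_eq0 eq_sym.
  by apply: (canRL (mulfK mu1_neq0)); lra.
- by rewrite ler0_pospart ?subr_le0 ?ltW // mulr0 subr0 in v_eq.
Qed.
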